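(* Let $\mathcal M$ be a left $\mathcal A$-module and $(N_i)_{i\in I}$ a family of $R$-submodules of $\mathcal M$. Then for every choice of $\vartheta$: (i) $\bigcap_{i\in I}\sigma_\vartheta(N_i)\subseteq\sigma_\vartheta\big(\bigcap_{i\in I}N_i\big)$; (ii) if $I$ is finite, then $\bigcap_{i\in I}\tau_\vartheta(N_i)\subseteq\tau_\vartheta\big(\bigcap_{i\in I}N_i\big)$. In particular, if $u\in\mathcal M$ and $N_1,\dots,N_k$ are $R$-submodules with $u\in\tau_\vartheta(N_i)$ for all $i$, then $u\in\tau_\vartheta\big(\bigcap_{i=1}^kN_i\big)$.
   Context: $R$ is a unital commutative ring and $\mathcal A$ an associative unital (not necessarily commutative) $R$-algebra. The symbol $\vartheta$ ranges over ''left'', ''right'', ''pre-two-sided'', ''two-sided''. An $R$-submodule $J\subseteq\mathcal A$ is a left (resp. right; two-sided) Mathieu subspace of $\mathcal A$ if whenever $a\in\mathcal A$ satisfies $a^m\in J$ for all $m\ge1$, then for all $b,c\in\mathcal A$ there is $N_0$ with $ba^m\in J$ (resp. $a^mc\in J$; $ba^mc\in J$) for all $m\ge N_0$; pre-two-sided means both left and right. A $\vartheta$-ideal means a left/right/two-sided ideal accordingly, and a two-sided ideal for $\vartheta$ = pre-two-sided. For a left $\mathcal A$-module $\mathcal M$, $u\in\mathcal M$, $N\subseteq \mathcal M$, $(N:u)=\{a\in\mathcal A: au\in N\}$. For an $R$-submodule $N$ of $\mathcal M$, $\sigma_\vartheta(N)=\{u\in\mathcal M: (N:u)\text{ is a }\vartheta\text{-ideal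 of }\mathcal A\}$ and $\tau_\vartheta(N)=\{u\in\mathcal M: (N:u)\text{ is a }\vartheta\text{-Mathieu subspace of }\mathcal A\}$. *)

From HB Require Import structures.
From mathcomp Require Import all_boot all_order all_algebra.
Set Implicit Arguments. Unset Strict Implicit. Unset Printing Implicit Defensive.
Import GRing.Theory.
Local Open Scope ring_scope.

Inductive theta := Left | Right | PreTwoSided | TwoSided.

Section MathieuDefs.
Variables (R : comPzRingType) (A : algType R) (M : lmodType A).

Definition is_Rsubmod_alg (J : A -> Prop) : Prop :=
  [/\ J 0, (forall x y, J x -> J y -> J (x + y)) & (forall (r : R) x, J x -> J (r *: x))].

Definition is_Rsubmod (N : M -> Prop) : Prop :=
  [/\ N 0, (forall x y, N x -> N y -> N (x + y))
         & (forall (r : R) x, N x -> N ((r%:A : A) *: x))].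

Definition colon (N : M -> Prop) (u : M) : A -> Prop := fun a => N (a *: u).

Definition left_ideal (J : A -> Prop) : Prop :=
  [/\ J 0, (forall x y, J x -> J y -> J (x + y)) & (forall a x, J x -> J (a * x))].
Definition right_ideal (J : A -> Prop) : Prop :=
  [/\ J 0, (forall x y, J x -> J y -> J (x + y)) & (forall a x, J x -> J (x * a))].
Definition two_sided_ideal (J : A -> Prop) : Prop := left_ideal J /\ right_ideal J.

Definition theta_ideal (t : theta) (J : A -> Prop) : Prop :=
  match t with
  | Left => left_ideal J
  | Right => right_ideal J
  | PreTwoSided | TwoSided => two_sided_ideal J
  end.

Definition all_powers_in (J : A -> Prop) (a : A) : Prop :=
  forall m : nat, (1 <= m)%N -> J (a ^+ m).

Definition left_Mathieu (J : A -> Prop) : Prop :=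
  is_Rsubmod_alg J /\
  forall a, all_powers_in J a ->
    forall b : A, exists N0 : nat, forall m : nat, (N0 <= m)%N -> J (b * a ^+ m).
Definition right_Mathieu (J : A -> Prop) : Prop :=
  is_Rsubmod_alg J /\
  forall a, all_powers_in J a ->
    forall c : A, exists N0 : nat, forall m : nat, (N0 <= m)%N -> J (a ^+ m * c).
Definition two_sided_Mathieu (J : A -> Prop) : Prop :=
  is_Rsubmod_alg J /\
  forall a, all_powers_in J a ->
    forall b c : A, exists N0 : nat, forall m : nat, (N0 <= m)%N -> J (b * a ^+ m * c).

Definition theta_Mathieu (t : theta) (J : A -> Prop) : Prop :=
  match t with
  | Left => left_Mathieu J
  | Right => right_Mathieu J
  | PreTwoSided => left_Mathieu J /\ right_Mathieu J
  | TwoSided => two_sided_Mathieu J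
  end.

Definition sigma_theta (t : theta) (N : M -> Prop) : M -> Prop :=
  fun u => theta_ideal t (colon N u).
Definition tau_theta (t : theta) (N : M -> Prop) : M -> Prop :=
  fun u => theta_Mathieu t (colon N u).

Definition bigcapM (I : Type) (F : I -> M -> Prop) : M -> Prop :=
  fun u => forall i, F i u.

End MathieuDefs.

From HB Require Import structures.
From mathcomp Require Import all_boot all_order all_algebra.
Local Open Scope ring_scope.

(* Ideals are stable under arbitrary intersections and Mathieu subspaces under
   finite ones, since finitely many thresholds [N0] have a common bound.  As
   [(bigcapM N : u)] is the intersection of the [(N i : u)], the theorem follows. *)

Definition bigcap {I T : Type} (F : I -> T -> Prop) : T -> Prop :=
  fun x => forall i, F i x.

Lemma colon_bigcapM (R : comPzRingType) (A : algType R) (M : lmodType A)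
    (I : Type) (N : I -> M -> Prop) (u : M) :
  colon (bigcapM N) u = bigcap (fun i => colon (N i) u).
Proof. by []. Qed.

Lemma eventually_forall_fin (I : finType) (P : I -> nat -> Prop) :
  (forall i, exists N0, forall m, (N0 <= m)%N -> P i m) ->
  exists N0, forall m, (N0 <= m)%N -> forall i, P i m.
Proof.
move=> evP.
suff [N0 HN0] : exists N0, forall i, i \in enum I -> forall m, (N0 <= m)%N -> P i m.
  by exists N0 => m le_N0m i; apply: HN0; rewrite ?mem_enum.
elim: (enum I) => [|x s [N IH]]; first by exists 0%N.
have [Nx Hx] := evP x.
exists (maxn N Nx) => i; rewrite inE => /orP[/eqP -> | i_s] m; rewrite geq_max.
  by case/andP=> _; apply: Hx.
by case/andP=> le_Nm _; apply: IH.
Qed.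

Section BigcapAlgebra.
Variables (R : comPzRingType) (A : algType R) (I : Type) (J : I -> A -> Prop).

Lemma is_Rsubmod_alg_bigcap :
  (forall i, is_Rsubmod_alg (J i)) -> is_Rsubmod_alg (bigcap J).
Proof.
move=> HJ; split=> [i | x y Jx Jy i | r x Jx i]; have [J0 addJ scaleJ] := HJ i.
- exact: J0.
- exact: addJ.
- exact: scaleJ.
Qed.

Lemma left_ideal_bigcap : (forall i, left_ideal (J i)) -> left_ideal (bigcap J).
Proof.
move=> HJ; split=> [i | x y Jx Jy i | a x Jx i]; have [J0 addJ mulJ] := HJ i.
- exact: J0.
- exact: addJ.
- exact: mulJ.
Qed.

Lemma right_ideal_bigcap : (forall i, right_ideal (J i)) -> right_ideal (bigcap J).
Proof.
move=> HJ; split=> [i | x y Jx Jy i | a x Jx i]; have [J0 addJ mulJ] := HJ i.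
- exact: J0.
- exact: addJ.
- exact: mulJ.
Qed.

Lemma two_sided_ideal_bigcap :
  (forall i, two_sided_ideal (J i)) -> two_sided_ideal (bigcap J).
Proof.
move=> HJ; split.
- by apply: left_ideal_bigcap => i; case: (HJ i).
- by apply: right_ideal_bigcap => i; case: (HJ i).
Qed.

Lemma theta_ideal_bigcap (t : theta) :
  (forall i, theta_ideal t (J i)) -> theta_ideal t (bigcap J).
Proof.
case: t; [exact: left_ideal_bigcap | exact: right_ideal_bigcap
         | exact: two_sided_ideal_bigcap | exact: two_sided_ideal_bigcap].
Qed.

End BigcapAlgebra.

Section BigcapMathieu.
Variables (R : comPzRingType) (A : algType R) (I : finType) (J : I -> A -> Prop).

Lemma all_powers_in_bigcap (a : A) :
  all_powers_in (bigcap J) a -> forall i, all_powers_in (J i) a.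
Proof. by move=> Ja i m m_gt0; apply: Ja. Qed.

Lemma left_Mathieu_bigcap :
  (forall i, left_Mathieu (J i)) -> left_Mathieu (bigcap J).
Proof.
move=> HJ; split; first by apply: is_Rsubmod_alg_bigcap => i; case: (HJ i).
move=> a /all_powers_in_bigcap Ja b; apply: eventually_forall_fin => i.
by case: (HJ i) => _; apply.
Qed.

Lemma right_Mathieu_bigcap :
  (forall i, right_Mathieu (J i)) -> right_Mathieu (bigcap J).
Proof.
move=> HJ; split; first by apply: is_Rsubmod_alg_bigcap => i; case: (HJ i).
move=> a /all_powers_in_bigcap Ja c; apply: eventually_forall_fin => i.
by case: (HJ i) => _; apply.
Qed.

Lemma two_sided_Mathieu_bigcap :
  (forall i, two_sided_Mathieu (J i)) -> two_sided_Mathieu (bigcap J).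
Proof.
move=> HJ; split; first by apply: is_Rsubmod_alg_bigcap => i; case: (HJ i).
move=> a /all_powers_in_bigcap Ja b c; apply: eventually_forall_fin => i.
by case: (HJ i) => _; apply.
Qed.

Lemma theta_Mathieu_bigcap (t : theta) :
  (forall i, theta_Mathieu t (J i)) -> theta_Mathieu t (bigcap J).
Proof.
case: t => /= HJ; [exact: left_Mathieu_bigcap | exact: right_Mathieu_bigcap | |
                   exact: two_sided_Mathieu_bigcap].
split; [apply: left_Mathieu_bigcap | apply: right_Mathieu_bigcap] => i; by case: (HJ i).
Qed.

End BigcapMathieu.

Theorem proposition3p7 (R : comPzRingType) (A : algType R) (M : lmodType A)
    (t : theta) :
  (forall (I : Type) (N : I -> M -> Prop),
     (forall i, is_Rsubmod (N i)) ->
     forall u : M, bigcapM (fun i => sigma_theta t (N i)) u ->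
       sigma_theta t (bigcapM N) u)
  /\
  (forall (I : finType) (N : I -> M -> Prop),
     (forall i, is_Rsubmod (N i)) ->
     forall u : M, bigcapM (fun i => tau_theta t (N i)) u ->
       tau_theta t (bigcapM N) u)
  /\
  (forall (k : nat) (N : 'I_k -> M -> Prop) (u : M),
     (forall i, is_Rsubmod (N i)) ->
     (forall i, tau_theta t (N i) u) ->
     tau_theta t (bigcapM N) u).
Proof.
have tau_bigcap (I : finType) (N : I -> M -> Prop) (u : M) :
    (forall i, tau_theta t (N i) u) -> tau_theta t (bigcapM N) u.
  by rewrite /tau_theta colon_bigcapM; apply: theta_Mathieu_bigcap.
split; last split.
- move=> I N _ u; rewrite /sigma_theta colon_bigcapM.
  exact: theta_ideal_bigcap.
- by move=> I N _ u; apply: tau_bigcap.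
- by move=> k N u _; apply: tau_bigcap.
Qed.
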